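(* Let $n>5$ with $n\equiv 0\pmod 4$, and consider odd $r\in[3,n-3]$. Then $E(D_n^s[r,n-r])$ attains its maximum at $r=3$, and $$E(D_n^s[3,n-3])>E(D_n^s[5,n-5])>\dots>E\!\left(D_n^s\!\left[\tfrac{n-2}{2},\tfrac{n+2}{2}\right]\right),$$ the chain running over odd $r=3,5,7,\dots,\frac{n-2}{2}$.
   Context: A signed digraph (sidigraph) is a digraph in which every arc carries a sign $+1$ or $-1$; the energy of a sidigraph is the sum of the absolute values of the real parts of the eigenvalues of its signed adjacency matrix. For $k\ge 2$, $C_k$ denotes a directed cycle of length $k$ all of whose arc signs multiply to $+1$. It is known that for odd $k$, $E(C_k)=\csc\frac{\pi}{2k}$ (and the same holds for a negative cycle of odd length). For integers $p,q\ge2$ with $p+q\le n$, $D_n^s[p,q]$ denotes an $n$-vertex sidigraph whose only directed cycles are two vertex-disjoint positive cycles $C_p$ and $C_q$ (other vertices lie on no directed cycle); its energy is $E(C_p)+E(C_q)$. *)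

From HB Require Import structures.
From mathcomp Require Import all_boot all_order all_algebra all_field.
Set Implicit Arguments. Unset Strict Implicit. Unset Printing Implicit Defensive.
Import Order.TTheory GRing.Theory Num.Theory.
Local Open Scope ring_scope.

(* The spectrum (eigenvalues with algebraic multiplicity) of a square matrix
   over algC: a sequence s with char_poly A = \prod_(z <- s) ('X - z). *)
Definition spectrum (n : nat) (A : 'M[algC]_n) : seq algC :=
  sval (closed_field_poly_normal (char_poly A)).

Definition energy (n : nat) (A : 'M[algC]_n) : algC :=
  \sum_(z <- spectrum A) `|'Re z|.

(* Signed adjacency matrix of a concrete representative of D_n^s[p,q]:
   vertices 0..p-1 form the directed cycle 0->1->...->p-1->0,
   vertices p..p+q-1 form the directed cycle p->...->p+q-1->p,
   all arcs have sign +1 (so both cycles are positive); the remaining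
   n-p-q vertices are isolated (lie on no directed cycle). *)
Definition Ds_mx (n p q : nat) : 'M[algC]_n :=
  \matrix_(i < n, j < n)
    (if (i < p)%N then ((j : nat) == (i.+1 %% p)%N)%:R
     else if (i < p + q)%N then ((j : nat) == (p + ((i - p).+1 %% q))%N)%:R
     else 0).

Definition E_D (n p q : nat) : algC := energy (Ds_mx n p q).

(* The matrix of D_n^s[p, q] is block diagonal with the two cycle
   matrices, whose characteristic polynomials are X^p - 1 and X^q - 1, so its
   spectrum is the p-th and q-th roots of unity.  For odd p the absolute real
   parts of the p-th roots of unity are the |cos (j PI / p)|, which telescope
   to csc (PI / (2 p)); hence E(D_n^s[r, n - r]) = csc (PI / (2 r)) +
   csc (PI / (2 (n - r))).  The function x |-> csc (PI / (2 x)) is strictly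
   convex on [1, +oo) (its derivative is increasing), so moving two vertices
   from the longer to the shorter cycle decreases the energy; the symmetry
   r <-> n - r gives the maximum at r = 3.

   The energy is defined over the algebraic complex numbers algC, while the
   trigonometry lives in the real numbers R.  The bridge is the order
   embedding of the real algebraic numbers into R (a supremum of rationals),
   extended to an injective ring morphism algC -> R[i]. *)

From Stdlib Require Import Reals Lra Psatz Lia.
From Coquelicot Require Import Coquelicot.

Section CscConvexity.
Local Open Scope R_scope.

(* kappa t = t^2 cos t / sin^2 t; up to the factor 2/PI it is the derivative
   of x |-> csc (PI / (2 x)) at x = PI / (2 t). *)
Definition kappa t := t ^ 2 * cos t / (sin t) ^ 2.
Definition kappa' t := t * (2 * sin t * cos t - t - t * (cos t) ^ 2) / (sin t) ^ 3.

Lemma kappa_derivative t : 0 < t < PI -> derivable_pt_lim kappa t (kappa' t).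
Proof.
intros [t0 tPI]; assert (sin_pos : 0 < sin t) by (apply sin_gt_0; lra).
apply is_derive_Reals; unfold kappa, kappa'.
auto_derive; [intro; nra |].
assert (c2 : cos t ^ 2 = 1 - sin t ^ 2) by (pose proof (sin2_cos2 t); unfold Rsqr in *; simpl; lra).
field_simplify; try lra.
rewrite c2; field; lra.
Qed.

(* On (0, PI/2] the numerator 2 sin t cos t - t (1 + cos^2 t) is negative:
   it equals - t (1 - cos t)^2 - 2 cos t (t - sin t), and sin t < t. *)
Lemma kappa'_neg t : 0 < t <= PI / 2 -> kappa' t < 0.
Proof.
intros [t0 tPI2].
assert (sin_pos : 0 < sin t) by (apply sin_gt_0; lra).
assert (cos_nneg : 0 <= cos t) by (apply cos_ge_0; lra).
assert (sin_lt : sin t < t) by (apply sin_lt_x; lra).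
assert (numerator_neg : 2 * sin t * cos t - t - t * (cos t) ^ 2 < 0).
{ assert (0 <= t * (1 - cos t) ^ 2) by (apply Rmult_le_pos; [lra | apply pow2_ge_0]).
  assert (0 <= cos t * (t - sin t)) by (apply Rmult_le_pos; lra).
  destruct (Req_dec (cos t) 1) as [c1 | c1].
  - rewrite c1; simpl; lra.
  - assert (0 < (1 - cos t) ^ 2) by (apply pow2_gt_0; lra).
    assert (0 < t * (1 - cos t) ^ 2) by (apply Rmult_lt_0_compat; lra).
    nra. }
assert (0 < sin t ^ 3) by (apply pow_lt; lra).
unfold kappa', Rdiv; apply Rmult_neg_pos; [nra | apply Rinv_0_lt_compat; lra].
Qed.

Lemma kappa_decreasing t1 t2 : 0 < t1 -> t1 < t2 -> t2 <= PI / 2 -> kappa t2 < kappa t1.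
Proof.
intros t1_pos t12 t2_le.
destruct (MVT_cor2 kappa kappa' t1 t2 t12) as [c [kappa_diff c_range]].
- intros c hc; apply kappa_derivative; lra.
- assert (kappa' c < 0) by (apply kappa'_neg; lra).
  nra.
Qed.

(* cscpi p = csc (PI / (2 p)): for odd p this is the energy of a p-cycle. *)
Definition cscpi x := / sin (PI / (2 * x)).
Definition cscpi' x := kappa (PI / (2 * x)) * 2 / PI.

Lemma cscpi_derivative x : 1 <= x -> derivable_pt_lim cscpi x (cscpi' x).
Proof.
intros x1; pose proof PI_RGT_0.
assert (angle : 0 < PI / (2 * x) <= PI / 2).
{ split; [apply Rdiv_lt_0_compat; lra |].
  unfold Rdiv; apply Rmult_le_compat_l; [lra | apply Rinv_le_contravar; lra]. }
assert (0 < sin (PI / (2 * x))) by (apply sin_gt_0; lra).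
apply is_derive_Reals; unfold cscpi, cscpi', kappa.
auto_derive; [repeat split; lra |].
unfold Rdiv in *; field; repeat split; lra.
Qed.

Lemma cscpi'_increasing x1 x2 : 1 <= x1 -> x1 < x2 -> cscpi' x1 < cscpi' x2.
Proof.
intros x1_ge1 x12; pose proof PI_RGT_0; unfold cscpi'.
assert (kappa (PI / (2 * x1)) < kappa (PI / (2 * x2))).
{ apply kappa_decreasing; unfold Rdiv.
  - apply Rmult_lt_0_compat; [lra | apply Rinv_0_lt_compat; lra].
  - apply Rmult_lt_compat_l; [lra | apply Rinv_lt_contravar; nra].
  - apply Rmult_le_compat_l; [lra |].
    replace (/ 2) with (/ (2 * 1)) by (f_equal; ring).
    apply Rinv_le_contravar; lra. }
unfold Rdiv; apply Rmult_lt_compat_r; [apply Rinv_0_lt_compat |]; lra.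
Qed.

Lemma cscpi_convex a b : 1 <= a -> a + 2 <= b ->
  cscpi (a + 2) - cscpi a < cscpi (b + 2) - cscpi b.
Proof.
intros a1 ab.
destruct (MVT_cor2 cscpi cscpi' a (a + 2)) as [c1 [slope_a c1_range]];
  [lra | intros c hc; apply cscpi_derivative; lra |].
destruct (MVT_cor2 cscpi cscpi' b (b + 2)) as [c2 [slope_b c2_range]];
  [lra | intros c hc; apply cscpi_derivative; lra |].
rewrite slope_a, slope_b.
assert (cscpi' c1 < cscpi' c2) by (apply cscpi'_increasing; lra).
lra.
Qed.

End CscConvexity.

From HB Require Import structures.
From mathcomp Require Import all_boot all_order all_algebra all_field.
From mathcomp Require Import classical_sets reals Rstruct complex ring lra zify.
Import Order.TTheory GRing.Theory Num.Theory.
Local Open Scope ring_scope.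

Definition cycle_mx (k : nat) : 'M[algC]_k :=
  \matrix_(i < k, j < k) ((j : nat) == (i.+1 %% k)%N)%:R.

Lemma char_poly_castmx (S : comNzRingType) (m n : nat) (e : m = n) (M : 'M[S]_m) :
  char_poly (castmx (e, e) M) = char_poly M.
Proof. by case: n / e; rewrite castmx_id. Qed.

(* The cycle matrix is the companion matrix of X^k - 1. *)
Lemma char_poly_cycle_mx k : (0 < k)%N -> char_poly (cycle_mx k) = 'X^k - 1.
Proof.
move=> k_gt0; have size_k : (size ('X^k - 1 : {poly algC})).-1 = k.
  by rewrite -[1]/(1%:P) size_XnsubC.
have -> : cycle_mx k = castmx (size_k, size_k) (companionmx ('X^k - 1 : {poly algC})).
  apply/matrixP => i j; rewrite castmxE !mxE /= size_k coefB coefXn coefC.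
  have j_neq_k : (j != k :> nat) by rewrite neq_ltn ltn_ord.
  rewrite (negPf j_neq_k) sub0r opprK.
  case: ifP => [/eqP i_last | i_not_last].
    by rewrite i_last prednK // modnn; case: eqP.
  rewrite modn_small; last first.
    rewrite ltn_neqAle ltn_ord andbT; apply/negP => /eqP i_succ.
    by move: i_not_last; rewrite -[X in X.-1]i_succ /= eqxx.
  by rewrite eq_sym.
rewrite char_poly_castmx companionmxK // monicE lead_coefE -[1]/(1%:P) size_XnsubC //.
by rewrite coefB coefXn coefC eqxx; case: k k_gt0 {size_k} => // k _; rewrite subr0.
Qed.

Lemma Ds_mx_block p q : Ds_mx (p + q) p q = block_mx (cycle_mx p) 0 0 (cycle_mx q).
Proof.
apply/matrixP => i j; rewrite -(splitK i) -(splitK j).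
case: (split i) => i'; case: (split j) => j'; rewrite /unsplit.
- by rewrite block_mxEul !mxE /= ltn_ord.
- rewrite block_mxEur !mxE /= ltn_ord.
  have p_gt0 : (0 < p)%N by apply: leq_ltn_trans (ltn_ord i').
  by case: eqP => // succ_eq; move: (ltn_mod i'.+1 p); rewrite p_gt0 -succ_eq ltnNge leq_addr.
- rewrite block_mxEdl !mxE /= ltnNge leq_addr /= ltn_add2l ltn_ord addKn.
  by case: eqP => // j_eq; move: (ltn_ord j'); rewrite j_eq ltnNge leq_addr.
- rewrite block_mxEdr !mxE /= ltnNge leq_addr /= ltn_add2l ltn_ord addKn.
  by rewrite eqn_add2l.
Qed.

Lemma char_poly_Ds_mx p q : (0 < p)%N -> (0 < q)%N ->
  char_poly (Ds_mx (p + q) p q) = ('X^p - 1) * ('X^q - 1).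
Proof.
move=> p_gt0 q_gt0; rewrite Ds_mx_block /char_poly char_block_diag_mx det_ublock.
by rewrite -!/(char_poly _) !char_poly_cycle_mx.
Qed.

Lemma energy_roots n (A : 'M[algC]_n) (s : seq algC) :
  char_poly A = \prod_(z <- s) ('X - z%:P) -> energy A = \sum_(z <- s) `|'Re z|.
Proof.
move=> charA; rewrite /energy /spectrum; case: (closed_field_poly_normal _) => t /= charAt.
apply: perm_big; apply: prod_XsubC_eq.
by rewrite -charA charAt (monicP (char_poly_monic _)) scale1r.
Qed.

Lemma E_D_roots {p q} {z w : algC} : p.-primitive_root z -> q.-primitive_root w ->
  E_D (p + q) p q =
  \sum_(0 <= i < p) `|'Re (z ^+ i)| + \sum_(0 <= i < q) `|'Re (w ^+ i)|.
Proof.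
move=> zp wq; have p_gt0 := prim_order_gt0 zp; have q_gt0 := prim_order_gt0 wq.
rewrite /E_D (@energy_roots _ _
  ([seq z ^+ i | i <- index_iota 0 p] ++ [seq w ^+ i | i <- index_iota 0 q])).
  by rewrite big_cat !big_map.
by rewrite char_poly_Ds_mx // big_cat !big_map /= (factor_Xn_sub_1 zp) (factor_Xn_sub_1 wq).
Qed.

Section RealEmbedding.
Context {F : archiNumFieldType} {R : realType}.

Definition rats_below (x : F) : set R :=
  [set y | exists q : rat, ratr q <= x /\ y = ratr q].
Definition embed (x : F) : R := sup (rats_below x).

Lemma ler_ratFR (q r : rat) : ((ratr q : F) <= ratr r) = ((ratr q : R) <= ratr r).
Proof. by rewrite !ler_rat. Qed.
Lemma ltr_ratFR (q r : rat) : ((ratr q : F) < ratr r) = ((ratr q : R) < ratr r).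
Proof. by rewrite !ltr_rat. Qed.

Lemma rats_below_has_sup {x} : x \is Num.real -> has_sup (rats_below x).
Proof.
move=> x_real; have /andP [floor_le lt_floor] := real_floor_itv x_real.
split; first by exists (ratr (Num.floor x)%:~R); exists (Num.floor x)%:~R; rewrite ratr_int.
exists (ratr (Num.floor x + 1)%:~R) => y [q [q_le ->]].
by rewrite -ler_ratFR ratr_int; apply/ltW/(le_lt_trans q_le).
Qed.

Section RationalBounds.
Variable x : F.
Hypothesis x_real : x \is Num.real.

Lemma embed_ge_rat q : ratr q <= x -> ratr q <= embed x.
Proof. by move=> q_le; apply: sup_upper_bound; [exact: rats_below_has_sup | exists q]. Qed.

Lemma embed_le_rat q : x <= ratr q -> embed x <= ratr q.
Proof.
move=> le_q; apply: ge_sup; first by case: (rats_below_has_sup x_real).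
by move=> y [r [r_le ->]]; rewrite -ler_ratFR (le_trans r_le).
Qed.

Lemma rat_lt_embed q : ratr q < embed x -> ratr q < x.
Proof.
by move=> q_lt; rewrite real_ltNge ?rpred_rat //; apply: contraTN q_lt => /embed_le_rat; rewrite -leNgt.
Qed.

Lemma embed_lt_rat q : embed x < ratr q -> x < ratr q.
Proof.
by move=> lt_q; rewrite real_ltNge ?rpred_rat //; apply: contraTN lt_q => /embed_ge_rat; rewrite -leNgt.
Qed.

Lemma embed_unique (y : R) :
  (forall q, ratr q < x -> ratr q <= y) -> (forall q, x < ratr q -> y <= ratr q) ->
  y = embed x.
Proof.
move=> below above; apply/eqP; rewrite eq_le; apply/andP; split.
  rewrite leNgt; apply/negP => /rat_in_itvoo [q]; rewrite in_itv /= => /andP [q_gt q_lt].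
  by have := above q (embed_lt_rat _ q_gt); rewrite leNgt q_lt.
rewrite leNgt; apply/negP => /rat_in_itvoo [q]; rewrite in_itv /= => /andP [q_gt q_lt].
by have := below q (rat_lt_embed _ q_lt); rewrite leNgt q_gt.
Qed.

Lemma rat_above_near {e : R} : 0 < e ->
  exists q, embed x < ratr q < embed x + e /\ x < ratr q.
Proof.
move=> e_gt0; have /rat_in_itvoo [q] : embed x < embed x + e by lra.
by rewrite in_itv /= => /andP [q_gt q_lt]; exists q; rewrite q_gt q_lt (embed_lt_rat _ q_gt).
Qed.

Lemma rat_below_near {e : R} : 0 < e ->
  exists q, embed x - e < ratr q < embed x /\ ratr q < x.
Proof.
move=> e_gt0; have /rat_in_itvoo [q] : embed x - e < embed x by lra.
by rewrite in_itv /= => /andP [q_gt q_lt]; exists q; rewrite q_gt q_lt (rat_lt_embed _ q_lt).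
Qed.

End RationalBounds.
Arguments embed_ge_rat {x}. Arguments embed_le_rat {x}. Arguments rat_lt_embed {x}.
Arguments embed_lt_rat {x}. Arguments embed_unique {x}.
Arguments rat_above_near {x} _ {e}. Arguments rat_below_near {x} _ {e}.

Lemma embed_rat q : embed (ratr q) = ratr q.
Proof.
symmetry; apply: embed_unique; first exact: rpred_rat.
  by move=> r; rewrite ltr_ratFR => /ltW.
by move=> r; rewrite ltr_ratFR => /ltW.
Qed.

Lemma embed0 : embed 0 = 0.
Proof. by have := embed_rat 0; rewrite !rmorph0. Qed.

Lemma embed1 : embed 1 = 1.
Proof. by have := embed_rat 1; rewrite !rmorph1. Qed.

Lemma embedD {x y} : x \is Num.real -> y \is Num.real -> embed (x + y) = embed x + embed y.
Proof.
move=> x_real y_real; symmetry; apply: embed_unique; first exact: rpredD.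
- move=> q q_lt; rewrite leNgt; apply/negP => lt_q.
  have e_gt0 : 0 < (ratr q - embed x - embed y) / 2 by lra.
  have [u [/andP [_ u_lt] x_lt]] := rat_above_near x_real e_gt0.
  have [v [/andP [_ v_lt] y_lt]] := rat_above_near y_real e_gt0.
  have : (ratr (u + v) : R) < ratr q by rewrite rmorphD /=; lra.
  rewrite -ltr_ratFR rmorphD /= => uv_lt.
  by have := lt_trans (lt_trans q_lt (ltrD x_lt y_lt)) uv_lt; rewrite ltxx.
- move=> q lt_q; rewrite leNgt; apply/negP => q_lt.
  have e_gt0 : 0 < (embed x + embed y - ratr q) / 2 by lra.
  have [u [/andP [u_gt _] u_lt]] := rat_below_near x_real e_gt0.
  have [v [/andP [v_gt _] v_lt]] := rat_below_near y_real e_gt0.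
  have : (ratr q : R) < ratr (u + v) by rewrite rmorphD /=; lra.
  rewrite -ltr_ratFR rmorphD /= => lt_uv.
  by have := lt_trans (lt_trans lt_uv (ltrD u_lt v_lt)) lt_q; rewrite ltxx.
Qed.

Lemma embedN {x} : x \is Num.real -> embed (- x) = - embed x.
Proof.
move=> x_real; apply/eqP; rewrite -subr_eq0 opprK addrC.
by rewrite -embedD ?rpredN // subrr embed0.
Qed.

Lemma embedB {x y} : x \is Num.real -> y \is Num.real -> embed (x - y) = embed x - embed y.
Proof. by move=> x_real y_real; rewrite embedD ?rpredN // embedN. Qed.

Lemma embed_ge0 {x} : 0 <= x -> 0 <= embed x.
Proof. by move=> x_ge0; have := embed_ge_rat (ger0_real x_ge0) 0; rewrite !rmorph0; apply. Qed.

(* A positive x lies above the positive rational 1 / (floor (1 / x) + 1). *)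
Lemma embed_gt0 {x} : 0 < x -> 0 < embed x.
Proof.
move=> x_gt0; have x_real := gtr0_real x_gt0.
have inv_real : x^-1 \is Num.real by rewrite rpredV.
have /andP [_ lt_floor] := real_floor_itv inv_real.
set m := Num.floor x^-1 + 1.
have m_gt0 : (0 : F) < m%:~R by apply: lt_trans lt_floor; rewrite invr_gt0.
have m_gt0' : 0 < m by rewrite -(ltr_int F).
have inv_m_lt : (ratr (m%:~R)^-1 : F) < x.
  by rewrite fmorphV rmorph_int -(invrK x) ltf_pV2 // ?posrE ?invr_gt0.
apply: lt_le_trans (embed_ge_rat x_real _ (ltW inv_m_lt)).
by rewrite ltr0q invr_gt0 ltr0z.
Qed.

Lemma embed_lt {x y} : x \is Num.real -> y \is Num.real -> x < y -> embed x < embed y.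
Proof.
by move=> x_real y_real x_lt_y; rewrite -subr_gt0 -embedB // embed_gt0 // subr_gt0.
Qed.

Lemma embed_ltE {x y} : x \is Num.real -> y \is Num.real -> (embed x < embed y) = (x < y).
Proof.
move=> x_real y_real; apply/idP/idP; last exact: embed_lt.
apply: contraTT; rewrite -!real_leNgt ?num_real //.
rewrite le_eqVlt => /orP [/eqP -> // | /(embed_lt y_real x_real) /ltW //].
Qed.

Lemma embed_leE {x y} : x \is Num.real -> y \is Num.real -> (embed x <= embed y) = (x <= y).
Proof. by move=> x_real y_real; rewrite !real_leNgt ?num_real // embed_ltE. Qed.

Lemma embed_inj {x y} : x \is Num.real -> y \is Num.real -> embed x = embed y -> x = y.
Proof.
move=> x_real y_real xy; apply/eqP; rewrite eq_le -!embed_leE //.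
by rewrite xy lexx.
Qed.

Lemma common_pos_bound {a b c : R} : 0 < a -> 0 < b -> 0 < c ->
  exists e : R, [/\ 0 < e, e < a, e < b & e < c].
Proof.
move=> a_gt0 b_gt0 c_gt0; set m := Num.min a (Num.min b c).
have m_gt0 : 0 < m by rewrite !lt_min a_gt0 b_gt0 c_gt0.
have [ma mb mc] : [/\ m <= a, m <= b & m <= c] by rewrite !ge_min !lexx !orbT.
by exists (m / 2); split; lra.
Qed.

(* Multiplicativity on nonnegative elements, by approximating x and y by
   rationals from above and from below; the approximation error of the
   product is at most e (embed x + embed y + e). *)
Section NonnegProduct.
Variables x y : F.
Hypotheses (x_ge0 : 0 <= x) (y_ge0 : 0 <= y).
Let x_real := ger0_real x_ge0.
Let y_real := ger0_real y_ge0.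

Lemma rat_below_product q : ratr q < x * y -> ratr q <= embed x * embed y.
Proof.
move=> q_lt; rewrite leNgt; apply/negP => lt_q.
have ex_ge0 : 0 <= embed x :> R by exact: embed_ge0.
have ey_ge0 : 0 <= embed y :> R by exact: embed_ge0.
set d := ratr q - embed x * embed y.
have d_gt0 : 0 < d by rewrite /d; lra.
have ratio_gt0 : 0 < d / (embed x + embed y + 1) by rewrite divr_gt0 //; lra.
have [e [e_gt0 e_lt1 _ e_small]] := common_pos_bound ltr01 ltr01 ratio_gt0.
have err_lt : e * (embed x + embed y + 1) < d by rewrite -ltr_pdivlMr //; lra.
have [u [/andP [u_gt u_lt] x_lt]] := rat_above_near x_real e_gt0.
have [v [/andP [v_gt v_lt] y_lt]] := rat_above_near y_real e_gt0.
have : (ratr (u * v) : R) < ratr q.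
  have : ratr u * ratr v <= (embed x + e) * (embed y + e) :> R by apply: ler_pM; lra.
  rewrite rmorphM /= /d in err_lt *; nra.
rewrite -ltr_ratFR rmorphM /= => uv_lt.
by have := lt_trans (lt_trans q_lt (ltr_pM x_ge0 y_ge0 x_lt y_lt)) uv_lt; rewrite ltxx.
Qed.

Lemma rat_above_product q : x * y < ratr q -> embed x * embed y <= ratr q.
Proof.
move=> lt_q; rewrite leNgt; apply/negP => q_lt.
have ex_ge0 : 0 <= embed x :> R by exact: embed_ge0.
have ey_ge0 : 0 <= embed y :> R by exact: embed_ge0.
have q_gt0 : (0 : R) < ratr q by rewrite ltr0q -(ltr0q F) (le_lt_trans _ lt_q) // mulr_ge0.
have exy_gt0 : 0 < embed x * embed y by apply: lt_trans q_gt0 q_lt.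
have ex_gt0 : 0 < embed x.
  by rewrite lt_def ex_ge0 andbT; apply: contraTneq exy_gt0 => ->; rewrite mul0r ltxx.
have ey_gt0 : 0 < embed y.
  by rewrite lt_def ey_ge0 andbT; apply: contraTneq exy_gt0 => ->; rewrite mulr0 ltxx.
set d := embed x * embed y - ratr q.
have d_gt0 : 0 < d by rewrite /d; lra.
have ratio_gt0 : 0 < d / (embed x + embed y + 1) by rewrite divr_gt0 //; lra.
have [e [e_gt0 e_ltx e_lty e_small]] := common_pos_bound ex_gt0 ey_gt0 ratio_gt0.
have err_lt : e * (embed x + embed y + 1) < d by rewrite -ltr_pdivlMr //; lra.
have [u [/andP [u_gt _] u_lt]] := rat_below_near x_real e_gt0.
have [v [/andP [v_gt _] v_lt]] := rat_below_near y_real e_gt0.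
have : (ratr q : R) < ratr (u * v).
  have : (embed x - e) * (embed y - e) <= ratr u * ratr v :> R by apply: ler_pM; lra.
  rewrite rmorphM /= /d in err_lt *; nra.
rewrite -ltr_ratFR rmorphM /= => lt_uv.
have u_ge0 : (0 : F) <= ratr u by rewrite ler0q -(ler0q R); lra.
have v_ge0 : (0 : F) <= ratr v by rewrite ler0q -(ler0q R); lra.
by have := lt_trans (lt_trans lt_uv (ltr_pM u_ge0 v_ge0 u_lt v_lt)) lt_q; rewrite ltxx.
Qed.

Lemma embedM_nonneg : embed (x * y) = embed x * embed y.
Proof.
symmetry; apply: embed_unique; first exact: rpredM.
  exact: rat_below_product.
exact: rat_above_product.
Qed.

End NonnegProduct.

Lemma embedM {x y} : x \is Num.real -> y \is Num.real -> embed (x * y) = embed x * embed y.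
Proof.
have sign_split (z : F) : z \is Num.real -> 0 <= z \/ 0 <= - z.
  by move=> z_real; case: (real_ge0P z_real) => z_sign; [left | right; rewrite oppr_ge0 ltW].
move=> x_real y_real; have Nx_real : - x \is Num.real by rewrite rpredN.
have Ny_real : - y \is Num.real by rewrite rpredN.
case: (sign_split x x_real) => [x_ge0 | Nx_ge0]; case: (sign_split y y_real) => [y_ge0 | Ny_ge0].
- exact: embedM_nonneg.
- rewrite -[x * y]opprK -mulrN (embedN (realM x_real Ny_real)).
  by rewrite embedM_nonneg // embedN // mulrN opprK.
- rewrite -[x * y]opprK -mulNr (embedN (realM Nx_real y_real)).
  by rewrite embedM_nonneg // embedN // mulNr opprK.
- by rewrite -mulrNN embedM_nonneg // !embedN // mulrNN.
Qed.

Lemma embed_norm {x} : x \is Num.real -> embed `|x| = `|embed x|.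
Proof.
move=> x_real; case: (real_ge0P x_real) => [x_ge0 | x_lt0]; first by rewrite !ger0_norm ?embed_ge0.
rewrite !ltr0_norm ?embedN ?ltr0_real //.
by rewrite -embed0 embed_lt ?rpred0 ?ltr0_real.
Qed.

Lemma embed_sum (I : Type) (s : seq I) (P : pred I) (f : I -> F) :
  (forall i, f i \is Num.real) -> embed (\sum_(i <- s | P i) f i) = \sum_(i <- s | P i) embed (f i).
Proof.
move=> f_real; elim: s => [|i s IHs]; first by rewrite !big_nil embed0.
rewrite !big_cons; case: (P i); rewrite ?IHs //.
by rewrite embedD ?IHs //; apply: rpred_sum.
Qed.

End RealEmbedding.

Section ComplexEmbedding.
Variable R : realType.

Definition embedC (z : algC) : R[i] := (embed ('Re z) +i* embed ('Im z))%C.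

Lemma embedC1 : embedC 1 = 1.
Proof.
by rewrite /embedC (Creal_ReP _ (rpred1 _)) (Creal_ImP _ (rpred1 _)) embed1 embed0.
Qed.

Lemma embedCM z w : embedC (z * w) = embedC z * embedC w.
Proof.
have Re_real := Creal_Re; have Im_real := Creal_Im.
rewrite /embedC ReM ImM embedB ?realM // embedD ?realM // !embedM //.
by apply/eqP; rewrite eq_complex /= [embed ('Re w) * _]mulrC !eqxx.
Qed.

Lemma embedCX z n : embedC (z ^+ n) = embedC z ^+ n.
Proof. by elim: n => [|n IHn]; rewrite ?expr0 ?embedC1 // !exprS embedCM IHn. Qed.

Lemma embedC_inj : injective embedC.
Proof.
move=> z w [re_eq im_eq]; rewrite [z]algCrect [w]algCrect.
by rewrite (embed_inj (Creal_Re _) (Creal_Re _) re_eq) (embed_inj (Creal_Im _) (Creal_Im _) im_eq).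
Qed.

End ComplexEmbedding.

Arguments sin _%_ring_scope. Arguments cos _%_ring_scope.

Lemma PI_gt0 : 0 < PI.
Proof. by apply/RltP; exact: PI_RGT_0. Qed.

Lemma RN1E : IZR (Zneg xH) = -1 :> R. Proof. by []. Qed.
Lemma R2E : IZR (Zpos (xO xH)) = 2 :> R. Proof. by []. Qed.

Lemma two_sin_cos (h y : R) : 2 * sin h * cos y = sin (y + h) - sin (y - h).
Proof. by rewrite !sinD sin_neg cos_neg RoppE; ring. Qed.

(* A discrete antiderivative of j |-> 2 sin h |cos (2 j h)| on [0, 2 M] when
   (2 M + 1) h = PI / 2: cos (2 j h) >= 0 exactly for j <= M, and there
   2 sin h cos (2 j h) = sin ((2 j + 1) h) - sin ((2 j - 1) h). *)
Definition abs_cos_primitive (M : nat) (h : R) (j : nat) :=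
  if (j <= M)%N then sin (j%:R * (2 * h) - h) else 2 - sin (j%:R * (2 * h) - h).

Lemma abs_cos_primitive_step (M : nat) (h : R) (j : nat) : 0 < h -> M%:R * (2 * h) + h = PI / 2 ->
  (j <= M.*2)%N -> 2 * sin h * `|cos (j%:R * (2 * h))| =
  abs_cos_primitive M h j.+1 - abs_cos_primitive M h j.
Proof.
move=> h_gt0 half_pi j_le_2M; have M_ge0 : 0 <= (M%:R : R) by [].
have j_ge0 : 0 <= (j%:R : R) by [].
have cos_low : (j <= M)%N -> 0 <= cos (j%:R * (2 * h)).
  rewrite -(ler_nat R) => j_le; apply/RleP/cos_ge_0; apply/RleP; rewrite ?RealsE /=; nra.
have cos_high : (M < j)%N -> cos (j%:R * (2 * h)) <= 0.
  rewrite -(ler_nat R) => j_ge; move: j_le_2M; rewrite -(ler_nat R) -mul2n natrM.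
  move: j_ge; rewrite -natr1 => j_ge j_le.
  by apply/RleP/cos_le_0; apply/RleP; rewrite ?RealsE /=; nra.
have angle_succ : j.+1%:R * (2 * h) - h = j%:R * (2 * h) + h by rewrite -natr1; ring.
rewrite /abs_cos_primitive angle_succ.
have [j_lt_M | M_lt_j | j_eq_M] := ltngtP j M.
- by rewrite ger0_norm ?two_sin_cos // cos_low // ltnW.
- by rewrite ler0_norm ?cos_high // mulrN two_sin_cos; ring.
- rewrite ger0_norm; last by rewrite cos_low // j_eq_M.
  by rewrite two_sin_cos j_eq_M half_pi sin_PI2 R1E; ring.
Qed.

Lemma sum_abs_cos_odd {p} : odd p ->
  \sum_(0 <= j < p) `|cos (j%:R * (PI / p%:R))| = (sin (PI / (2 * p%:R)))^-1.
Proof.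
move=> p_odd; set h := PI / (2 * p%:R).
have [M p_eq] : exists M, p = M.*2.+1 by exists p./2; rewrite -[p in LHS]odd_double_half p_odd.
have pR : (p%:R : R) = 2 * M%:R + 1 by rewrite p_eq -mul2n -natr1 natrM.
have M_ge0 : 0 <= (M%:R : R) by [].
have p_gt0 : 0 < (p%:R : R) by rewrite pR; lra.
have p_neq0 : (p%:R : R) != 0 by rewrite gt_eqF.
have h_gt0 : 0 < h by rewrite divr_gt0 ?PI_gt0 //; lra.
have pi_eq : PI = 2 * p%:R * h by rewrite /h; field.
have half_pi : M%:R * (2 * h) + h = PI / 2 by rewrite /h pR; field; rewrite -pR.
have sin_h_gt0 : 0 < sin h.
  apply/RltP; apply: sin_gt_0; apply/RltP => //; rewrite [X in _ < X]pi_eq pR; nra.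
have F_last : abs_cos_primitive M h p = 2 - sin h.
  rewrite /abs_cos_primitive {1}p_eq leqNgt ltnS -addnn leq_addr /= -sin_PI_x RminusE.
  by congr (2 - sin _); rewrite pi_eq; ring.
have F_first : abs_cos_primitive M h 0 = - sin h.
  by rewrite /abs_cos_primitive mul0r add0r sin_neg RoppE.
have telescope : 2 * sin h * \sum_(0 <= j < p) `|cos (j%:R * (2 * h))| = 2.
  rewrite mulr_sumr (telescope_sumr_eq (abs_cos_primitive M h)) ?F_last ?F_first //.
    by ring.
  move=> j /andP [_ j_lt_p]; apply: abs_cos_primitive_step => //.
  by rewrite -ltnS -p_eq.
have -> : PI / p%:R = 2 * h by rewrite /h; field.
apply: (mulfI (x := 2 * sin h)); first by rewrite mulf_neq0 // ?pnatr_eq0 // gt_eqF.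
by rewrite telescope mulfK // gt_eqF.
Qed.

Lemma prim_rootP_order (S : nzRingType) n (x : S) : (0 < n)%N -> x ^+ n = 1 ->
  (forall k, (0 < k < n)%N -> x ^+ k != 1) -> n.-primitive_root x.
Proof.
move=> n_gt0 xn x_order; apply/andP; split => //; apply/forallP => i.
rewrite unity_rootE; have := ltn_ord i; rewrite leq_eqVlt => /orP [/eqP -> | i_lt].
  by rewrite xn !eqxx.
by rewrite (negPf (x_order _ _)) ?ltn_eqF.
Qed.

(* Two primitive n-th roots of unity have the same powers, up to order:
   both lists are the roots of X^n - 1. *)
Lemma prim_root_powers_perm {S : fieldType} {n} {x y : S} :
  n.-primitive_root x -> n.-primitive_root y ->
  perm_eq [seq x ^+ i | i <- index_iota 0 n] [seq y ^+ i | i <- index_iota 0 n].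
Proof.
move=> x_prim y_prim; apply: prod_XsubC_eq.
by rewrite !big_map (factor_Xn_sub_1 x_prim) (factor_Xn_sub_1 y_prim).
Qed.

Lemma embedC_prim_root (R : realType) {n} {z : algC} :
  n.-primitive_root z -> n.-primitive_root (embedC R z).
Proof.
move=> z_prim; have n_gt0 := prim_order_gt0 z_prim.
apply: prim_rootP_order => //; first by rewrite -embedCX prim_expr_order // embedC1.
move=> k /andP [k_gt0 k_lt_n]; rewrite -embedCX -(embedC1 R).
apply: contraTN isT => /eqP /embedC_inj /eqP.
by rewrite -(prim_order_dvd z_prim) gtnNdvd.
Qed.

(* For odd p, -exp (i PI / p) is a primitive p-th root of unity whose powers
   have real parts +- cos (k PI / p). *)
Section NegatedRootOfUnity.
Variable p : nat.
Hypotheses (p_gt0 : (0 < p)%N) (p_odd : odd p).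

Let theta := PI / (p%:R : R).
Definition neg_root : R[i] := Complex (- cos theta) (- sin theta).

Lemma neg_rootX k :
  neg_root ^+ k = Complex ((-1) ^+ k * cos (k%:R * theta)) ((-1) ^+ k * sin (k%:R * theta)).
Proof.
elim: k => [|k IHk]; first by rewrite expr0 !mul0r cos_0 sin_0 !mul1r R1E R0E.
rewrite exprS IHk -natr1 mulrDl mul1r cosD sinD exprS.
by apply/eqP; rewrite eq_complex /=; apply/andP; split; apply/eqP; ring.
Qed.

Lemma neg_root_prim : p.-primitive_root neg_root.
Proof.
have p_pi : p%:R * theta = PI by rewrite /theta mulrC divfK // pnatr_eq0 -lt0n.
apply: prim_rootP_order => //.
  rewrite neg_rootX p_pi cos_PI sin_PI -signr_odd p_odd expr1.
  by apply/eqP; rewrite eq_complex /= RN1E R0E mulr0 mulrNN mulr1 !eqxx.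
move=> k /andP [k_gt0 k_lt_p]; rewrite neg_rootX eq_complex negb_and orbC /=.
rewrite mulf_eq0 signr_eq0 /= gt_eqF //; apply/RltP/sin_gt_0; apply/RltP.
  by rewrite mulr_gt0 ?ltr0n // divr_gt0 ?ltr0n ?PI_gt0.
by rewrite -[X in _ < X]p_pi ltr_pM2r ?ltr_nat // divr_gt0 ?ltr0n ?PI_gt0.
Qed.

End NegatedRootOfUnity.
Arguments neg_root_prim {p}.

Lemma cscpiE x : cscpi x = (sin (PI / (2 * x)))^-1.
Proof. by rewrite /cscpi !RealsE. Qed.

Lemma embed_sum_abs_Re_roots p (z : algC) : odd p -> p.-primitive_root z ->
  embed (\sum_(0 <= i < p) `|'Re (z ^+ i)|) = cscpi p%:R :> R.
Proof.
move=> p_odd z_prim; have p_gt0 := prim_order_gt0 z_prim.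
rewrite embed_sum; last by move=> i; rewrite normr_real.
transitivity (\sum_(0 <= i < p) `|complex.Re (embedC R z ^+ i)|).
  by apply: eq_bigr => i _; rewrite embed_norm ?Creal_Re // -embedCX.
rewrite -(big_map (fun i => embedC R z ^+ i) xpredT (fun x => `|complex.Re x|)).
rewrite (perm_big _ (prim_root_powers_perm (embedC_prim_root R z_prim) (neg_root_prim p_gt0 p_odd))).
rewrite big_map cscpiE -(sum_abs_cos_odd p_odd); apply: eq_bigr => i _.
by rewrite neg_rootX /= normrMsign.
Qed.

Lemma energy_ge0 n (A : 'M[algC]_n) : 0 <= energy A.
Proof. by apply: sumr_ge0 => z _; rewrite normr_ge0. Qed.

Definition split_energy (n r : nat) := cscpi r%:R + cscpi (n - r)%:R.

Lemma embed_E_D n r : odd r -> odd (n - r) -> (r <= n)%N ->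
  embed (E_D n r (n - r)) = split_energy n r.
Proof.
move=> r_odd nr_odd r_le_n; have [z z_prim] := C_prim_root_exists (odd_gt0 r_odd).
have [w w_prim] := C_prim_root_exists (odd_gt0 nr_odd).
have sum_real (u : algC) m : \sum_(0 <= i < m) `|'Re (u ^+ i)| \is Num.real.
  by apply: rpred_sum => i _; exact: normr_real.
have := E_D_roots z_prim w_prim; rewrite subnKC // => ->.
by rewrite embedD ?sum_real // !embed_sum_abs_Re_roots.
Qed.

Lemma cscpi_nat_convex {a b : nat} : (1 <= a)%N -> (a + 2 <= b)%N ->
  cscpi (a + 2)%:R - cscpi a%:R < cscpi (b + 2)%:R - cscpi b%:R.
Proof.
move=> a_ge1 ab; rewrite !natrD; apply/RltP; apply: cscpi_convex.
  by apply/RleP; rewrite ler1n.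
by apply/RleP; rewrite RplusE R2E -natrD ler_nat.
Qed.

Lemma split_energy_step n r : (1 <= r)%N -> (2 * r + 4 <= n)%N ->
  split_energy n (r + 2) < split_energy n r.
Proof.
move=> r_ge1 rn; have room : (r + 2 <= n - r - 2)%N by lia.
have := cscpi_nat_convex r_ge1 room.
have -> : (n - r - 2 + 2 = n - r)%N by lia.
rewrite /split_energy (_ : n - (r + 2) = n - r - 2)%N; last by lia.
by move=> convex; lra.
Qed.

Lemma split_energy_le3 n r : odd r -> (3 <= r)%N -> (2 * r <= n)%N ->
  split_energy n r <= split_energy n 3.
Proof.
move=> r_odd r_ge3; have -> : r = (3 + 2 * (r./2 - 1))%N.
  by rewrite -[r in LHS]odd_double_half r_odd; lia.
elim: (r./2 - 1)%N => [|k IHk] rn; first by rewrite muln0 addn0.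
apply: le_trans (IHk _); last by lia.
rewrite (_ : 3 + 2 * k.+1 = 3 + 2 * k + 2)%N; last by lia.
by apply/ltW/split_energy_step; lia.
Qed.

Lemma split_energy_sym n r : (r <= n)%N -> split_energy n (n - r) = split_energy n r.
Proof. by move=> r_le_n; rewrite /split_energy subKn // addrC. Qed.

Lemma split_energy_max n r : ~~ odd n -> odd r -> (3 <= r)%N -> (r <= n - 3)%N ->
  split_energy n r <= split_energy n 3.
Proof.
move=> n_even r_odd r_ge3 r_le; have [r_half | r_half] := leqP (2 * r) n.
  exact: split_energy_le3.
rewrite -split_energy_sym; last by lia.
apply: split_energy_le3; [by rewrite oddB ?(negPf n_even) ?r_odd //; lia | lia | lia].
Qed.

Theorem lemma3p14 (n : nat) :
  (5 < n)%N -> (n %% 4 = 0)%N ->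
  (* maximum over odd r in [3, n-3] is attained at r = 3 *)
  (forall r : nat, odd r -> (3 <= r)%N -> (r <= n - 3)%N ->
     E_D n r (n - r) <= E_D n 3 (n - 3))
  /\
  (* strictly decreasing chain over odd r = 3, 5, ..., (n-2)/2 *)
  (forall r : nat, odd r -> (3 <= r)%N -> (r + 2 <= (n - 2) %/ 2)%N ->
     E_D n (r + 2) (n - (r + 2)) < E_D n r (n - r)).
Proof.
move=> n_gt5 n_mod4.
have n_even : ~~ odd n by rewrite (divn_eq n 4) n_mod4 addn0 oddM andbF.
have E_embed r : odd r -> (r <= n)%N -> embed (E_D n r (n - r)) = split_energy n r.
  by move=> r_odd r_le_n; rewrite embed_E_D // oddB // (negPf n_even) r_odd.
have E_real r : E_D n r (n - r) \is Num.real by rewrite ger0_real ?energy_ge0.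
have n_ge3 : (3 <= n)%N by lia.
split=> [r r_odd r_ge3 r_le | r r_odd r_ge3 r_le].
- have r_le_n : (r <= n)%N by lia.
  rewrite -(@embed_leE _ R) // !E_embed //.
  exact: split_energy_max.
- have r_room : (2 * r + 4 <= n)%N by move: r_le; rewrite leq_divRL //; lia.
  have [r_le_n r2_le_n] : (r <= n)%N /\ (r + 2 <= n)%N by split; lia.
  have r2_odd : odd (r + 2) by rewrite oddD r_odd.
  rewrite -(@embed_ltE _ R) // !E_embed //.
  by apply: split_energy_step; lia.
Qed.
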